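(* Let $G$ be a finite group, $S$ a generating set of $G$, and $s \in S$. Suppose that (i) $\langle s \rangle$ is a normal subgroup of $G$; (ii) the order $|s|$ divides $pq$, where $p$ and $q$ are distinct primes; (iii) $s^p \in Z(G)$; (iv) $q$ divides $|G/\langle s \rangle|$; and (v) $\mathrm{Cay}(G/\langle s \rangle; S)$ has a hamiltonian cycle. Then $\mathrm{Cay}(G;S)$ has a hamiltonian cycle.
   Context: For a group $G$ and a subset $S \subseteq G$, the Cayley graph $\mathrm{Cay}(G;S)$ has vertex set $G$, with $g$ adjacent to $gs$ for every $g \in G$ and $s \in S \cup S^{-1}$. For a normal subgroup $N$ of $G$, $\mathrm{Cay}(G/N;S)$ denotes the Cayley graph of $G/N$ with respect to the image of $S$ in $G/N$. $Z(G)$ is the center of $G$. *)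

From mathcomp Require Import all_boot all_order all_fingroup all_solvable.
Set Implicit Arguments. Unset Strict Implicit. Unset Printing Implicit Defensive.
Local Open Scope group_scope.

Definition cay_adj (T : finGroupType) (A : {set T}) : rel T :=
  fun x y => [exists a in A, (y == x * a) || (y == x * a^-1)].

Definition cay_hamiltonian (T : finGroupType) (V A : {set T}) : Prop :=
  exists c : seq T, [/\ uniq c, V =i c & path.cycle (cay_adj A) c].

From mathcomp Require Import all_boot all_fingroup all_solvable.
From mathcomp Require Import zify.
Set Implicit Arguments. Unset Strict Implicit. Unset Printing Implicit Defensive.

(* A hamiltonian cycle of
   Cay(G/N; S) lifts to a walk v_0, ..., v_n in G with v_(i+1) = v_i t_i,
   t_i in S or S^-1, whose first n vertices form a transversal of N; so
   #|G| = n #[s].  Conjugation by v_i^-1 acts on N by s |-> s ^+ e_i, and the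
   twist s ^+ (e_0 + ... + e_(n-1)) is what one extra s-step per coset adds
   to the endpoint of the walk.
   - If the twist is 1, spend L - 1 s-steps in every coset before following
     t_i (L the index of <[v_n v_0^-1]> in N): the passes through the cosets
     are left translates by powers of v_n v_0^-1 and #[v_n v_0^-1] of them
     form a hamiltonian cycle (a factor group lemma argument).
   - Otherwise the twist is central (left multiplication permutes the cosets)
     of order p (as s ^+ p is central and q | n); with #[s] | pq this forces
     s to be central, and the n x #[s] grid of cosets with n >= q >= 2 has a
     hamiltonian "snake". *)

Section SeqWalks.
Variable T : Type.
Implicit Types (r : rel T) (f : nat -> T) (B : nat -> seq T).

Lemma path_map_iota r f x m n :
  (0 < n -> r x (f m)) ->
  (forall b, m <= b -> b.+1 < m + n -> r (f b) (f b.+1)) ->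
  path r x [seq f b | b <- iota m n].
Proof.
elim: n x m => [|n IH] x m //= rx rf.
rewrite rx //=; apply: IH => [n0|b mb bn]; apply: rf; lia.
Qed.

Lemma last_map_iota f x m n : last x [seq f b | b <- iota m n.+1] = f (m + n).
Proof.
elim: n x m => [|n IH] x m /=; first by rewrite addn0.
by have := IH (f m) m.+1; rewrite /= => ->; rewrite addSnnS.
Qed.

Lemma path_flatten_iota r B x m n :
  (0 < n -> path r x (B m)) ->
  (forall j y, m <= j -> j.+1 < m + n -> path r (last y (B j)) (B j.+1)) ->
  path r x (flatten [seq B j | j <- iota m n]).
Proof.
elim: n x m => [|n IH] x m //= Bx BB.
rewrite cat_path Bx //=; apply: IH => [n0|j y mj jn]; apply: BB; lia.
Qed.

Lemma last_flatten_iota B x y m n :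
  0 < size (B (m + n)) ->
  last x (flatten [seq B j | j <- iota m n.+1]) = last y (B (m + n)).
Proof.
rewrite -[n.+1]addn1 iotaD map_cat flatten_cat last_cat /= cats0.
by case: (B (m + n)).
Qed.

Lemma size_flatten_const B (s : seq nat) c :
  (forall j, j \in s -> size (B j) = c) ->
  size (flatten [seq B j | j <- s]) = size s * c.
Proof.
elim: s => [|j s IH] //= sizeB; rewrite size_cat sizeB ?mem_head // IH //.
by move=> j' s_j'; apply: sizeB; rewrite inE s_j' orbT.
Qed.

End SeqWalks.

Lemma uniq_flatten_disjoint (T : eqType) (B : nat -> seq T) (s : seq nat) :
  uniq s -> (forall j, j \in s -> uniq (B j)) ->
  (forall j j' x, j \in s -> j' \in s -> x \in B j -> x \in B j' -> j = j') ->
  uniq (flatten [seq B j | j <- s]).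
Proof.
elim: s => [|j s IH] //= /andP[js Us] uB disjB.
have uB' j' : j' \in s -> uniq (B j') by move=> j's; apply: uB; rewrite inE j's orbT.
have disjB' j1 j2 x : j1 \in s -> j2 \in s -> x \in B j1 -> x \in B j2 -> j1 = j2.
  by move=> j1s j2s; apply: disjB; rewrite inE ?j1s ?j2s orbT.
rewrite cat_uniq uB ?mem_head // IH // andbT.
apply/hasPn => x /flatten_mapP[j' j's xB]; apply/negP => xBj.
have j'_eq : j = j' by apply: disjB xBj xB; rewrite ?mem_head // inE j's orbT.
by rewrite j'_eq j's in js.
Qed.

Definition lex3 (T : Type) (F : nat -> nat -> nat -> T) (d n L : nat) : seq T :=
  flatten [seq flatten [seq [seq F a i b | b <- iota 0 L] | i <- iota 0 n]
          | a <- iota 0 d].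

Section Lex3.
Variables (T : Type) (F : nat -> nat -> nat -> T) (d n L : nat).

Lemma size_lex3 : size (lex3 F d n L) = d * (n * L).
Proof.
rewrite /lex3 (@size_flatten_const _ _ _ (n * L)) ?size_iota // => a _.
rewrite (@size_flatten_const _ _ _ L) ?size_iota // => i _.
by rewrite size_map size_iota.
Qed.

Lemma cycle_lex3 (r : rel T) :
  0 < d -> 0 < n -> 0 < L ->
  (forall a i b, a < d -> i < n -> b.+1 < L -> r (F a i b) (F a i b.+1)) ->
  (forall a i, a < d -> i.+1 < n -> r (F a i L.-1) (F a i.+1 0)) ->
  (forall a, a.+1 < d -> r (F a n.-1 L.-1) (F a.+1 0 0)) ->
  r (F d.-1 n.-1 L.-1) (F 0 0 0) ->
  path.cycle r (lex3 F d n L).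
Proof.
move=> d0 n0 L0 stepb stepi stepa wrap.
pose row a i := [seq F a i b | b <- iota 0 L].
pose pass a := flatten [seq row a i | i <- iota 0 n].
have last_row a i y : last y (row a i) = F a i L.-1.
  by rewrite /row -(prednK L0) last_map_iota.
have last_pass a y : last y (pass a) = F a n.-1 L.-1.
  rewrite /pass -{1}(prednK n0) (last_flatten_iota _ y) ?add0n ?last_row //.
  by rewrite size_map size_iota.
have path_pass a x : a < d -> r x (F a 0 0) -> path r x (pass a).
  move=> ad rx; apply: path_flatten_iota => [_|i y _ i_lt].
    by apply: path_map_iota => // b _ bL; apply: stepb.
  rewrite last_row; apply: path_map_iota => [_|b _ bL]; first exact: stepi.
  by apply: stepb => //; lia.
rewrite /lex3 -/pass (cycle_path (F 0 0 0)) -{1}(prednK d0).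
rewrite (last_flatten_iota _ (F 0 0 0)) ?add0n ?last_pass; last first.
  by rewrite /pass (@size_flatten_const _ _ _ L) ?size_iota ?muln_gt0 ?n0 //
     => i _; rewrite size_map size_iota.
apply: path_flatten_iota => [_|a y _ a_lt]; first exact: path_pass.
by rewrite last_pass; apply: path_pass => //; apply: stepa.
Qed.

End Lex3.

Lemma mem_lex3 (T : eqType) (F : nat -> nat -> nat -> T) d n L x :
  x \in lex3 F d n L -> exists a i b, [/\ a < d, i < n, b < L & x = F a i b].
Proof.
case/flatten_mapP => a; rewrite mem_iota => /andP[_ ad] /flatten_mapP[i].
rewrite mem_iota => /andP[_ i_n] /mapP[b]; rewrite mem_iota => /andP[_ bL] ->.
by exists a, i, b.
Qed.

Lemma uniq_lex3 (T : eqType) (F : nat -> nat -> nat -> T) d n L :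
  (forall a i b a' i' b', a < d -> i < n -> b < L -> a' < d -> i' < n -> b' < L ->
     F a i b = F a' i' b' -> [/\ a = a', i = i' & b = b']) ->
  uniq (lex3 F d n L).
Proof.
move=> F_inj; apply: uniq_flatten_disjoint => [|a|a a' x]; rewrite ?iota_uniq //.
  rewrite mem_iota => /andP[_ ad].
  apply: uniq_flatten_disjoint => [|i|i i' x]; rewrite ?iota_uniq //.
    rewrite mem_iota => /andP[_ i_n]; rewrite map_inj_in_uniq ?iota_uniq // => b b'.
    rewrite !mem_iota => /andP[_ bL] /andP[_ b'L] /F_inj.
    by case=> //.
  rewrite !mem_iota => /andP[_ i_n] /andP[_ i'_n] /mapP[b] + -> /mapP[b'].
  rewrite !mem_iota => /andP[_ bL] /andP[_ b'L] /F_inj.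
  by case=> //.
rewrite !mem_iota => /andP[_ ad] /andP[_ a'd] /flatten_mapP[i] + /mapP[b] + ->.
rewrite !mem_iota => /andP[_ i_n] /andP[_ bL] /flatten_mapP[i'] + /mapP[b'].
rewrite !mem_iota => /andP[_ i'_n] /andP[_ b'L] /F_inj.
by case=> //.
Qed.

Local Open Scope group_scope.

Lemma cycle_nth (T : Type) (r : rel T) (c : seq T) x0 i :
  path.cycle r c -> i < size c -> r (nth x0 c i) (nth x0 c (i.+1 %% size c)).
Proof.
rewrite (cycle_path x0) => /(pathP x0) step i_lt.
case: (ltnP i.+1 (size c)) => [i1_lt | i1_ge].
  by rewrite modn_small //; apply: step i1_lt.
have -> : i.+1 = size c by lia.
rewrite modnn; have /= := step 0 (leq_ltn_trans (leq0n i) i_lt).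
by rewrite -nth_last (_ : i = (size c).-1) //; lia.
Qed.

Section CayleyGraphs.
Variable gT : finGroupType.
Implicit Types (A S V : {set gT}) (x y a : gT).

Lemma cay_adj_step A x a : (a \in A) || (a^-1 \in A) -> cay_adj A x (x * a).
Proof.
case/orP => aA; apply/existsP; [exists a | exists a^-1].
  by rewrite aA eqxx.
by rewrite aA invgK eqxx orbT.
Qed.

Lemma cay_adj_sym A : symmetric (cay_adj A).
Proof.
move=> x y; apply/existsP/existsP => -[a /andP[aA /orP[] /eqP->]];
  by exists a; rewrite aA ?mulgK ?mulgKV eqxx ?orbT.
Qed.

Lemma ham_of_uniq V A (c : seq gT) :
  uniq c -> {subset c <= V} -> #|V| <= size c -> path.cycle (cay_adj A) c ->
  cay_hamiltonian V A.
Proof.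
move=> c_uniq cV c_size c_cycle; exists c; split=> // x.
have cV' : {subset c <= enum V} by move=> y /cV; rewrite mem_enum.
have c_size' : size (enum V) <= size c by rewrite -cardE.
have [_ ->] := uniq_min_size c_uniq cV' c_size'.
by rewrite mem_enum.
Qed.

Lemma ham_of_cover V A (c : seq gT) :
  {subset V <= c} -> {subset c <= V} -> size c <= #|V| ->
  path.cycle (cay_adj A) c -> cay_hamiltonian V A.
Proof.
move=> Vc cV c_size c_cycle; exists c; split => //; last first.
  by move=> x; apply/idP/idP => [/Vc | /cV].
apply: (@leq_size_uniq _ (enum V)); rewrite ?enum_uniq -?cardE //.
by move=> x; rewrite mem_enum => /Vc.
Qed.

Lemma lift_adj (N : {group gT}) S (X Y : coset_of N) :
  S \subset 'N(N) -> cay_adj (coset N @: S) X Y ->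
  exists t, ((t \in S) || (t^-1 \in S)) && (Y == X * coset N t).
Proof.
move=> nNS /existsP[_ /andP[/imsetP[a aS ->] /orP[] /eqP->]].
  by exists a; rewrite aS eqxx.
by exists a^-1; rewrite invgK aS orbT morphV ?eqxx // (subsetP nNS).
Qed.

Lemma lift_walk (G N : {group gT}) S (cq : seq (coset_of N)) :
  S \subset G -> G \subset 'N(N) -> G / N =i cq ->
  path.cycle (cay_adj (coset N @: S)) cq ->
  exists v t : nat -> gT,
    [/\ forall i, i <= size cq -> v i \in G,
        forall i, i < size cq -> (t i \in S) || ((t i)^-1 \in S),
        forall i, v i.+1 = v i * t i &
        forall i, i <= size cq -> coset N (v i) = nth 1 cq (i %% size cq)].
Proof.
move=> sSG nNG cqE cq_cycle; set n := size cq; pose C i := nth 1 cq i.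
pose P i t := ((t \in S) || (t^-1 \in S)) && (C (i.+1 %% n) == C i * coset N t).
pose t i := odflt 1 [pick t | P i t].
have tP i : i < n -> P i (t i).
  move=> i_lt; rewrite /t; case: pickP => [//|noP].
  have [u Pu] := lift_adj (subset_trans sSG nNG) (cycle_nth 1 cq_cycle i_lt).
  by have := noP u; rewrite /P Pu.
have tG i : i < n -> t i \in G.
  by move=> /tP/andP[/orP[]/(subsetP sSG)] // /groupVl.
have n_gt0 : 0 < n by have := group1 (G / N); rewrite cqE /n; case: (cq).
have [v0 v0G v0E] : exists2 v0, v0 \in G & coset N v0 = C 0.
  have : C 0 \in G / N by rewrite cqE mem_nth.
  by case/morphimP => x _ xG ->; exists x.
pose v i := v0 * \prod_(j < i) t j.
have vS i : v i.+1 = v i * t i by rewrite /v big_ord_recr /= mulgA.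
have vG i : i <= n -> v i \in G.
  elim: i => [|i IH] i_le; first by rewrite /v big_ord0 mulg1.
  by rewrite vS groupM ?IH ?tG //; lia.
exists v, t; split=> // [i /tP/andP[] // | ].
elim=> [|i IH] i_le; first by rewrite mod0n /v big_ord0 mulg1 v0E.
rewrite vS morphM ?(subsetP nNG) ?vG ?tG; try lia.
have /andP[_ /eqP] := tP i i_le; rewrite /C => ->.
by rewrite /= IH ?modn_small //; lia.
Qed.

End CayleyGraphs.

Lemma mul_unit_mod_inj L e b b' :
  coprime L e -> b < L -> b' < L -> b * e = b' * e %[mod L] -> b = b'.
Proof.
move=> Le bL b'L; wlog le_bb' : b b' bL b'L / b <= b'.
  by move=> W; case: (leqP b b') => [|/ltnW] le E; [|symmetry]; apply: W.
move/eqP; rewrite eq_sym eqn_mod_dvd ?leq_mul2r ?le_bb' ?orbT // -mulnBl.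
rewrite Gauss_dvdl // => L_dvd; case: (posnP (b' - b)) => [|pos]; first lia.
by have := dvdn_leq pos L_dvd; lia.
Qed.

Section CyclicConjugation.
Variable gT : finGroupType.
Implicit Types (s g x y : gT) (G : {group gT}).

Definition conj_exp s g : nat :=
  if [pick i : 'I_#[s] | s ^ g == s ^+ i] is Some i then i else 0.

Lemma conj_expE s g : g \in 'N(<[s]>) -> s ^ g = s ^+ conj_exp s g.
Proof.
move=> gN; have /cycleP[i si] : s ^ g \in <[s]> by rewrite memJ_norm ?cycle_id.
rewrite /conj_exp; case: pickP => [m /eqP // | no_exp].
have := no_exp (Ordinal (ltn_pmod i (order_gt0 s))).
by rewrite /= expg_mod_order si eqxx.
Qed.

(* Conjugation is an automorphism of <[s]>, so its exponent is a unit. *)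
Lemma coprime_conj_exp s g : g \in 'N(<[s]>) -> coprime #[s] (conj_exp s g).
Proof.
move=> gN; rewrite -generator_coprime -conj_expE // /generator cycleJ.
by rewrite (normP gN) eqxx.
Qed.

(* Since <[s]> is abelian, conjugating s only depends on the coset mod <[s]>. *)
Lemma conjg_coset s x y :
  x \in 'N(<[s]>) -> y \in 'N(<[s]>) -> coset <[s]> x = coset <[s]> y ->
  s ^ x = s ^ y.
Proof.
move=> xN yN /(kercoset_rcoset xN yN)[z /cycleP[m ->] ->].
by rewrite conjgM [s ^ (s ^+ m)]conjgE (commuteX m (commute_refl s)) mulKg.
Qed.

(* If s ^+ p and an element x of order p of <[s]> are central, where the
   order of s divides p * q, then s itself is central: the orders of s ^+ p
   and x are coprime and their product is #[s]. *)
Lemma cycle_center s x p q G :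
  prime p -> prime q -> p != q -> #[s] %| p * q ->
  s ^+ p \in 'Z(G) -> x \in <[s]> -> x \in 'Z(G) -> x != 1 -> x ^+ p = 1 ->
  s \in 'Z(G).
Proof.
move=> p_pr q_pr pq s_pq spZ xs xZ x_ntriv xp1.
set H := (<[s]> :&: 'Z(G))%G.
have x_p : #[x] = p.
  have /(prime_nt_dvdP p_pr) -> // : #[x] %| p by rewrite order_dvdn xp1.
  by rewrite order_eq1.
have p_s : p %| #[s] by rewrite -x_p order_dvdG.
have p_H : p %| #|H| by rewrite -x_p order_dvdG // inE xs.
have sp_H : #[s] %/ p %| #|H|.
  by rewrite -orderXdiv // order_dvdG // inE mem_cycle spZ.
have s_q : #[s] %/ p %| q.
  by rewrite -(dvdn_pmul2l (prime_gt0 p_pr)) mulnC divnK.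
have cop : coprime p (#[s] %/ p).
  by apply: (coprime_dvdr s_q); rewrite prime_coprime // dvdn_prime2.
have s_H : #[s] %| #|H| by rewrite -(divnK p_s) mulnC Gauss_dvd // p_H sp_H.
have /eqP H_s : H :==: <[s]>.
  by rewrite eqEcard subsetIl (dvdn_leq (cardG_gt0 H)).
by have := cycle_id s; rewrite -H_s => /setIP[].
Qed.

End CyclicConjugation.

Lemma expg_sum_congr (gT : finGroupType) (x : gT) n (f g : 'I_n -> nat) :
  (forall i, x ^+ f i = x ^+ g i) -> x ^+ (\sum_i f i) = x ^+ (\sum_i g i).
Proof.
move=> fg; apply/eqP; rewrite eq_expg_mod_order -modn_summ.
rewrite (eq_bigr (fun i => g i %% #[x])) ?modn_summ // => i _.
by apply/eqP; rewrite -eq_expg_mod_order fg.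
Qed.

(* For a walk v in the normaliser of <[s]>, v i * s = s ^+ e_i * v i with
   e_i = conj_exp s (v i)^-1; the twist is e_0 + ... + e_(n-1), so that
   v_0 s t_0 s t_1 ... s t_(n-1) = s ^+ twist * v_n. *)
Definition twist (gT : finGroupType) (s : gT) (v : nat -> gT) (n : nat) : nat :=
  \sum_(i < n) conj_exp s (v i)^-1.

Lemma twistS (gT : finGroupType) (s : gT) v n :
  twist s v n.+1 = twist s v n + conj_exp s (v n)^-1.
Proof. by rewrite /twist big_ord_recr. Qed.

Section LiftedWalk.
Variables (gT : finGroupType) (G : {group gT}) (S : {set gT}) (s : gT).
Hypotheses (sS : s \in S) (nsG : <[s]> <| G).
Variable cq : seq (coset_of <[s]>).
Hypotheses (cq_uniq : uniq cq) (cqE : G / <[s]> =i cq).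
Local Notation n := (size cq).
Local Notation N := <[s]>.
Variables v t : nat -> gT.
Hypotheses (vG : forall i, i <= n -> v i \in G)
           (tS : forall i, i < n -> (t i \in S) || ((t i)^-1 \in S))
           (vS : forall i, v i.+1 = v i * t i)
           (v_coset : forall i, i <= n -> coset N (v i) = nth 1 cq (i %% n)).

Let nNG : G \subset 'N(N) := normal_norm nsG.

Lemma vN i : i <= n -> v i \in 'N(N).
Proof. by move/vG/(subsetP nNG). Qed.

Lemma v_ordG (i : 'I_n) : v i \in G.
Proof. exact/vG/ltnW. Qed.

Lemma v_ordN (i : 'I_n) : v i \in 'N(N).
Proof. exact/vN/ltnW. Qed.

Lemma n_gt0 : 0 < n.
Proof. by have := group1 (G / N); rewrite cqE; case: (cq). Qed.

Lemma card_G : #|G| = (n * #[s])%N.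
Proof.
have <- : #|G / N| = n by rewrite (eq_card cqE); apply/card_uniqP.
by rewrite card_quotient // -(Lagrange (normal_sub nsG)) mulnC.
Qed.

Lemma v_inj i j : i < n -> j < n -> coset N (v i) = coset N (v j) -> i = j.
Proof.
move=> i_lt j_lt; rewrite !v_coset ?(ltnW i_lt) ?(ltnW j_lt) // !modn_small //.
by move/eqP; rewrite nth_uniq // => /eqP.
Qed.

Lemma v_cover g : g \in G -> exists2 i, i < n & coset N g = coset N (v i).
Proof.
move=> gG; have gq : coset N g \in cq by rewrite -cqE mem_quotient.
have idx_lt : index (coset N g) cq < n by rewrite index_mem.
exists (index (coset N g) cq) => //.
by rewrite v_coset ?(ltnW idx_lt) // modn_small ?nth_index.
Qed.

Lemma v_closed : coset N (v n) = coset N (v 0).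
Proof. by rewrite !v_coset // modnn mod0n. Qed.

Lemma v_commute i : i <= n -> v i * s = s ^+ conj_exp s (v i)^-1 * v i.
Proof. by move=> i_le; rewrite -conj_expE ?groupV ?vN // conjgCV. Qed.

Lemma coset_perm h : h \in G ->
  exists2 pi : 'I_n -> 'I_n, injective pi &
    forall i : 'I_n, coset N (h * v i) = coset N (v (pi i)).
Proof.
move=> hG; have hvG (i : 'I_n) : h * v i \in G by rewrite groupM ?v_ordG.
pose pi (i : 'I_n) := odflt i [pick j : 'I_n | coset N (h * v i) == coset N (v j)].
have piP (i : 'I_n) : coset N (h * v i) = coset N (v (pi i)).
  rewrite /pi; case: pickP => [j /eqP // | no_j].
  have [j j_lt vj] := v_cover (hvG i).
  by have := no_j (Ordinal j_lt); rewrite /= vj eqxx.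
exists pi => // i i' pi_eq; apply/ord_inj/v_inj => //.
apply: (mulgI (coset N h)); rewrite -!morphM ?v_ordN ?(subsetP nNG) //.
by rewrite /= !piP pi_eq.
Qed.

(* If s ^+ p is central then each e_i * p acts like p, and q %| n kills it. *)
Lemma twist_expp p q : q %| n -> #[s] %| p * q -> s ^+ p \in 'Z(G) ->
  (s ^+ twist s v n) ^+ p = 1.
Proof.
move=> q_n s_pq /centerP[_ spC].
rewrite -expgnA /twist big_distrl /=.
rewrite (@expg_sum_congr _ _ _ _ (fun=> p)) => [|i].
  rewrite sum_nat_const card_ord; apply/eqP; rewrite -order_dvdn.
  by apply: dvdn_trans s_pq _; rewrite mulnC dvdn_mul.
rewrite expgnA -conj_expE ?groupV ?v_ordN // -conjXg.
by rewrite conjgE spC ?groupV ?v_ordG // mulKg.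
Qed.

(* Conjugating by h in G permutes the e_i up to the factor conj_exp s h, so
   s ^+ twist is central. *)
Lemma twist_center : s ^+ twist s v n \in 'Z(G).
Proof.
have sG : s \in G by rewrite (subsetP (normal_sub nsG)) ?cycle_id.
apply/centerP; split=> [|h hG]; first by rewrite groupX.
rewrite /commute conjgC; congr (h * _); rewrite conjXg.
have [pi pi_inj piE] := coset_perm (groupVr hG).
rewrite conj_expE ?(subsetP nNG) // -expgnA /twist big_distrr /=.
rewrite [in RHS](reindex_inj pi_inj) /=; apply: expg_sum_congr => i.
have hvN : h^-1 * v i \in 'N(N) by rewrite (subsetP nNG) ?groupM ?groupV ?v_ordG.
have cosetV : coset N (h^-1 * v i)^-1 = coset N (v (pi i))^-1.
  by rewrite !morphV ?v_ordN // /= piE.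
rewrite -conj_expE ?groupV ?v_ordN // -(conjg_coset _ _ cosetV) ?groupV ?v_ordN //.
rewrite invMg invgK conjgM [s ^ _]conj_expE ?groupV ?v_ordN // conjXg.
by rewrite conj_expE ?(subsetP nNG) // -expgnA.
Qed.

(* When the twist vanishes, walk through each coset with L - 1 steps along s
   (L = #|<[s]> : <[v n * (v 0)^-1]>|), then along the next t i: one pass
   ends in g * v 0 with g = v n * (v 0)^-1, and #[g] passes close up. *)
Section Untwisted.
Variable j : nat.
Hypotheses (vn : v n = s ^+ j * v 0) (untwisted : s ^+ twist s v n = 1).
Local Notation L := (gcdn #[s] j).
Local Notation d := #[s ^+ j].
Local Notation e i := (conj_exp s (v i)^-1).

(* The b-th vertex visited in coset i during pass a. *)
Let F a i b := s ^+ (j * a + (L.-1 * twist s v i + b * e i)) * v i.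

Lemma order_gcd : (d * L)%N = #[s].
Proof. by rewrite orderXgcd divnK // dvdn_gcdl. Qed.

Lemma F_step_s a i b : i <= n -> F a i b * s = F a i b.+1.
Proof.
move=> i_le; rewrite /F -mulgA v_commute // mulgA -expgnDr.
by congr (s ^+ _ * _); rewrite mulSn; lia.
Qed.

Lemma F_step_t a i : F a i L.-1 * t i = F a i.+1 0.
Proof. by rewrite /F -mulgA -vS twistS mulnDr mul0n addn0 addnA. Qed.

(* Since the twist vanishes, the end of pass a is the start of pass a+1,
   and pass d is pass 0 again. *)
Lemma F_next_pass a : F a n 0 = F a.+1 0 0.
Proof.
rewrite /F [twist s v 0]/twist big_ord0 !muln0 !mul0n !addn0 expgnDr.
rewrite [(L.-1 * _)%N]mulnC [s ^+ (twist _ _ _ * _)]expgnA untwisted expg1n mulg1.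
rewrite vn mulgA -expgnDr.
by congr (s ^+ _ * _); lia.
Qed.

Lemma F_period : F d 0 0 = F 0 0 0.
Proof.
by rewrite /F [twist s v 0]/twist big_ord0 !muln0 !addn0 expgnA expg_order expg0.
Qed.

Lemma F_coset a i b : coset N (F a i b) = coset N (v i).
Proof. by rewrite /F coset_kerl ?mem_cycle. Qed.

(* Distinct indices give distinct vertices: cosets separate i, the
   exponent mod L separates b (e_i is a unit) and then mod #[s] a. *)
Lemma F_inj a i b a' i' b' :
  a < d -> i < n -> b < L -> a' < d -> i' < n -> b' < L ->
  F a i b = F a' i' b' -> [/\ a = a', i = i' & b = b'].
Proof.
move=> ad i_lt bL a'd i'_lt b'L FF.
have ii' : i = i' by apply: v_inj; rewrite // -(F_coset a i b) FF F_coset.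
move: FF; rewrite /F -{}ii' => /mulIg/eqP; rewrite eq_expg_mod_order => E.
have cop : coprime L (e i).
  apply: (coprime_dvdl (dvdn_gcdl _ _)).
  by rewrite coprime_conj_exp ?groupV ?vN ?(ltnW i_lt).
have jL z : (j * z = j %/ L * z * L)%N by rewrite mulnAC divnK ?dvdn_gcdr.
have bb' : b = b'.
  apply: (mul_unit_mod_inj cop bL b'L); apply/eqP.
  have /eqP : j * a + (L.-1 * twist s v i + b * e i)
           = j * a' + (L.-1 * twist s v i + b' * e i) %[mod L].
    by rewrite -(modn_dvdm _ (dvdn_gcdl _ j)) (eqP E) modn_dvdm ?dvdn_gcdl.
  by rewrite !jL !modnMDl !eqn_modDl.
move: E; rewrite -{}bb' eqn_modDr -eq_expg_mod_order !expgnA eq_expg_mod_order.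
by rewrite !modn_small // => /eqP ->.
Qed.

Lemma F_pass_end a : F a n.-1 L.-1 * t n.-1 = F a.+1 0 0.
Proof. by rewrite F_step_t prednK ?n_gt0 // F_next_pass. Qed.

Lemma ham_untwisted_voltage : cay_hamiltonian G S.
Proof.
have sG : s \in G by rewrite (subsetP (normal_sub nsG)) ?cycle_id.
have L_gt0 : 0 < L by rewrite gcdn_gt0 order_gt0.
have d_gt0 : 0 < d := order_gt0 _.
apply: (@ham_of_uniq _ _ _ (lex3 F d n L)).
- exact/uniq_lex3/F_inj.
- move=> _ /mem_lex3[a [i [b [_ i_lt _ ->]]]].
  by rewrite /F groupM ?groupX // vG // ltnW.
- by rewrite card_G size_lex3 -{1}order_gcd mulnCA.
apply: cycle_lex3 => //; try exact: n_gt0.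
- move=> a i b _ i_lt _; rewrite -F_step_s ?(ltnW i_lt) //.
  by apply: cay_adj_step; rewrite sS.
- by move=> a i _ i_lt; rewrite -F_step_t; apply/cay_adj_step/tS; lia.
- by move=> a _; rewrite -F_pass_end; apply/cay_adj_step/tS; rewrite prednK ?n_gt0.
rewrite -F_period -[X in F X 0 0](prednK d_gt0) -F_pass_end.
by apply/cay_adj_step/tS; rewrite prednK ?n_gt0.
Qed.

End Untwisted.

Lemma ham_untwisted : s ^+ twist s v n = 1 -> cay_hamiltonian G S.
Proof.
move=> untwisted; have [z /cycleP[j ->] vn] := kercoset_rcoset (vN (leqnn n))
  (vN (leq0n n)) v_closed.
exact: ham_untwisted_voltage vn untwisted.
Qed.

(* The central case: the cosets v i <[s]> (i < n) form an n x #[s] grid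
   whose columns are s-cycles and whose rows are joined by the t i.  Go up
   column 0, snake through the other columns avoiding row 0, and return
   along row 0. *)
Section Central.
Hypotheses (n_gt1 : 1 < n) (k_gt1 : 1 < #[s]) (sZ : s \in 'Z(G)).
Local Notation k := #[s].

Let x m i := s ^+ m * v i.

(* Since s is central, the grid moves s ^+ m v i -> s ^+ m.+1 v i and
   s ^+ m v i -> s ^+ m v (i+1) are edges. *)
Lemma adj_up m i : i <= n -> cay_adj S (x m i) (x m.+1 i).
Proof.
move=> i_le; have /centerP[_ sC] := sZ.
by rewrite /x expgSr -mulgA sC ?vG // mulgA; apply: cay_adj_step; rewrite sS.
Qed.

Lemma adj_down m i : i <= n -> cay_adj S (x m.+1 i) (x m i).
Proof. by move=> i_le; rewrite cay_adj_sym adj_up. Qed.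

Lemma adj_row m i : i < n -> cay_adj S (x m i) (x m i.+1).
Proof. by move=> i_lt; rewrite /x vS mulgA; apply/cay_adj_step/tS. Qed.

Let h i b := if odd i then (k.-1 - b)%N else b.+1.
Let column0 := [seq x b 0 | b <- iota 0 k].
Let column i := [seq x (h i b) i | b <- iota 0 k.-1].
Let snake := flatten [seq column i | i <- iota 1 n.-1].
Let row0 := [seq x 0 (n.-1 - b) | b <- iota 0 n.-1].
Let grid_cycle := column0 ++ snake ++ row0.

(* The cycle has k + (n-1)(k-1) + (n-1) = n k entries, all in G and
   covering G. *)
Lemma grid_cycle_size : size grid_cycle = (n * k)%N.
Proof.
rewrite !size_cat (@size_flatten_const _ _ _ k.-1) ?size_map ?size_iota.
  have [n' ->] : exists n', n = n'.+2 by exists n.-2; lia.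
  have [k' ->] : exists k', k = k'.+2 by exists k.-2; lia.
  by rewrite /= !mulSn !mulnS; lia.
by move=> i _; rewrite size_map size_iota.
Qed.

Lemma grid_cycle_sub : {subset grid_cycle <= G}.
Proof.
have sG : s \in G := subsetP (center_sub G) s sZ.
have xG m i : i <= n -> x m i \in G by move=> i_le; rewrite groupM ?groupX ?vG.
move=> y; rewrite !mem_cat => /orP[/mapP[b _ ->] | /orP[]]; first exact: xG.
  by case/flatten_mapP=> i; rewrite mem_iota => i_lt /mapP[b _ ->]; apply: xG; lia.
by case/mapP=> b _ ->; apply: xG; lia.
Qed.

Lemma grid_cycle_cover : {subset G <= grid_cycle}.
Proof.
move=> g gG; have [i i_lt gv] := v_cover gG.
have [z /cycleP[m0 ->] ->] := kercoset_rcoset (subsetP nNG g gG) (vN (ltnW i_lt)) gv.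
rewrite -expg_mod_order -/(x _ i); set m := (m0 %% k)%N.
have m_lt : m < k by rewrite ltn_mod order_gt0.
rewrite !mem_cat; case: (posnP i) => [-> | i_gt0].
  by apply/orP; left; apply: (map_f (x^~ 0)); rewrite mem_iota.
case: (posnP m) => [-> | m_gt0].
  apply/orP; right; apply/orP; right.
  rewrite -[in x 0 i](_ : n.-1 - (n.-1 - i) = i)%N; last lia.
  by apply: (map_f (fun b => x 0 (n.-1 - b))); rewrite mem_iota; lia.
apply/orP; right; apply/orP; left; apply/flatten_mapP; exists i.
  by rewrite mem_iota; lia.
apply/mapP; exists (if odd i then k.-1 - m else m.-1)%N.
  by rewrite mem_iota; case: (odd i); lia.
by rewrite /h; case: (odd i); congr (x _ i); lia.
Qed.

Lemma column_step i b : i < n -> b.+1 < k.-1 ->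
  cay_adj S (x (h i b) i) (x (h i b.+1) i).
Proof.
move=> i_lt b_lt; rewrite /h; case: (odd i); last exact/adj_up/ltnW.
by rewrite (_ : k.-1 - b = (k.-1 - b.+1).+1)%N; [exact/adj_down/ltnW | lia].
Qed.

Lemma column_turn i : h i k.-2 = h i.+1 0.
Proof. by rewrite /h /=; case: (odd i) => /=; lia. Qed.

Lemma last_column i y : last y (column i) = x (h i k.-2) i.
Proof. by rewrite /column -(prednK (_ : 0 < k.-1)) ?last_map_iota //; lia. Qed.

Lemma path_snake : path (cay_adj S) (x k.-1 0) snake.
Proof.
apply: path_flatten_iota => [_ | i y i_ge i_lt].
  apply: path_map_iota => [_ | b _ b_lt]; last exact: column_step.
  by rewrite /h /= subn0; apply: adj_row; lia.
rewrite last_column column_turn.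
by apply: path_map_iota => [_ | b _ b_lt];
  [apply: adj_row | apply: column_step]; lia.
Qed.

(* The snake ends in column n - 1 at height 1 or k - 1, next to row 0. *)
Lemma snake_exit y : cay_adj S (last y snake) (x 0 n.-1).
Proof.
rewrite /snake -(prednK (_ : 0 < n.-1)) ?(last_flatten_iota _ y); try lia;
  last by rewrite size_map size_iota; lia.
rewrite add1n prednK ?last_column; last lia.
rewrite /h; case: (odd _).
  by rewrite (_ : k.-1 - k.-2 = 1)%N; [apply: adj_down | ]; lia.
have -> : x 0 n.-1 = x k n.-1 by rewrite /x expg_order.
rewrite -[in x k](prednK (ltnW k_gt1)) (_ : k.-2.+1 = k.-1); last lia.
by apply: adj_up; lia.
Qed.

Lemma grid_cycle_path : path.cycle (cay_adj S) grid_cycle.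
Proof.
have n1_gt0 : 0 < n.-1 by lia.
rewrite (cycle_path (x 0 0)) /grid_cycle !last_cat /row0 -(prednK n1_gt0).
rewrite last_map_iota add0n prednK // (_ : n.-1 - n.-1.-1 = 1)%N; last lia.
rewrite cat_path; apply/andP; split.
  apply: path_map_iota => [_ | b _ b_lt]; last exact: adj_up.
  by rewrite cay_adj_sym; apply: adj_row; lia.
rewrite cat_path (_ : last _ column0 = x k.-1 0) ?path_snake /=; last first.
  by rewrite /column0 -(prednK (order_gt0 s)) last_map_iota.
apply: path_map_iota => [_ | b _ b_lt]; first by rewrite subn0 snake_exit.
rewrite cay_adj_sym (_ : n.-1 - b = (n.-1 - b.+1).+1)%N; last lia.
by apply: adj_row; lia.
Qed.

Lemma ham_central : cay_hamiltonian G S.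
Proof.
apply: (@ham_of_cover _ _ _ grid_cycle grid_cycle_cover grid_cycle_sub).
  by rewrite grid_cycle_size card_G.
exact: grid_cycle_path.
Qed.

End Central.

End LiftedWalk.

Theorem mainTheorem2 (gT : finGroupType) (G : {group gT}) (S : {set gT})
  (s : gT) (p q : nat) :
  <<S>> = G -> s \in S ->
  <[s]> <| G ->
  prime p -> prime q -> p != q -> (#[s] %| p * q)%N ->
  s ^+ p \in 'Z(G) ->
  (q %| #|G / <[s]>|)%N ->
  cay_hamiltonian (G / <[s]>) (coset <[s]> @: S) ->
  cay_hamiltonian G S.
Proof.
move=> genS sS nsG p_pr q_pr pq s_pq spZ q_quo [cq [cq_uniq cqE cq_cycle]].
have sSG : S \subset G by rewrite -genS subset_gen.
have [v [t [vG tS vS v_coset]]] := lift_walk sSG (normal_norm nsG) cqE cq_cycle.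
have [untwisted | twisted] := eqVneq (s ^+ twist s v (size cq)) 1.
  exact: (ham_untwisted sS nsG cq_uniq cqE vG tS vS v_coset untwisted).
have q_n : q %| size cq by rewrite -(card_uniqP cq_uniq) -(eq_card cqE).
have n_gt1 : 1 < size cq.
  by apply: leq_trans (prime_gt1 q_pr) (dvdn_leq (n_gt0 cqE) q_n).
have k_gt1 : 1 < #[s].
  rewrite ltnNge; apply: contra twisted => k_le1.
  have k1 : #[s] = 1%N by apply/eqP; rewrite eqn_leq k_le1 order_gt0.
  by rewrite -expg_mod_order k1 modn1.
apply: (ham_central sS nsG cq_uniq cqE vG tS vS v_coset n_gt1 k_gt1).
apply: (cycle_center p_pr q_pr pq s_pq spZ (mem_cycle s _) _ twisted).
  by apply: (twist_center nsG cq_uniq cqE vG) => i; apply: v_coset.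
exact: (twist_expp nsG vG q_n).
Qed.
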